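(* Let $A_1,\dots,A_m\in\mathbb{S}^n$, $b\in\mathbb{R}^m$, $C\in\mathbb{S}^n$, and let $p$ be such that Assumption 1 holds, with associated dimension $m'$. Let $Y\in\mathcal{M}_p$ be a second-order critical point of (P) and $X=YY^\top$ (so $X$ lies in the relative interior of the face $\mathcal{F}_X$). If $\operatorname{rank}(Y)=p$, then $S=S(Y)$ has at most $\left\lfloor\frac{\dim\mathcal{F}_X-\Delta}{p}\right\rfloor$ negative eigenvalues, where $\Delta=\frac{p(p+1)}{2}-m'$. In particular, if $\dim\mathcal{F}_X<\Delta+p$, then $S$ is positive semidefinite and $X$ is globally optimal for (SDP) and $Y$ is globally optimal for (P).
   Context: $\mathbb{S}^n$: real symmetric $n\times n$ matrices; $\langle U,V\rangle=\operatorname{tr}(U^\top V)$. $\mathcal{A}(X)_i=\langle A_i,X\rangle$, $\mathcal{A}^*(\nu)=\sum_i\nu_iA_i$. $\mathcal{C}=\{X\in\mathbb{S}^n:\mathcal{A}(X)=b,\ X\succeq0\}$ (non-empty); (SDP): minimize $\langle C,X\rangle$ over $\mathcal{C}$. $\mathcal{M}_p=\{Y\in\mathbb{R}^{n\times p}:\mathcal{A}(YY^\top)=b\}$; (P): minimize $\langle CY,Y\rangle$ over $\mathcal{M}_p$. Assumption 1 (for $p$ with $\mathcal{M}_p\ne\emptyset$): either (a) $A_1Y,\dots,A_mY$ are linearly independent for all $Y\in\mathcal{M}_p$, or (b) $\operatorname{span}\{A_1Y,\dots,A_mY\}$ has constant dimension for all $Y$ in an open neighborhood of $\mathcal{M}_p$;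 $m'$ is the dimension of this span for $Y\in\mathcal{M}_p$. For $Y\in\mathcal{M}_p$: $T_Y=\{\dot Y:\langle A_iY,\dot Y\rangle=0\ \forall i\}$; $G_{ij}=\langle A_iY,A_jY\rangle$, $\mu=G^\dagger\mathcal{A}(CYY^\top)$, $S(Y)=C-\mathcal{A}^*(\mu)$. $Y$ is second-order critical if $S(Y)Y=0$ and $\langle\dot Y,S(Y)\dot Y\rangle\ge0$ for all $\dot Y\in T_Y$. A face of convex $\mathcal{C}$ is a convex subset $\mathcal{F}$ such that every closed segment in $\mathcal{C}$ with a relative interior point in $\mathcal{F}$ has both endpoints in $\mathcal{F}$; $\mathcal{F}_X$ is the unique face containing $X$ in its relative interior; its dimension is that of its affine hull. *)

From HB Require Import structures.
From mathcomp Require Import all_boot all_order all_algebra.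
From mathcomp Require Import boolp classical_sets reals.

Set Implicit Arguments.
Unset Strict Implicit.
Unset Printing Implicit Defensive.

Import Order.TTheory GRing.Theory Num.Theory.
Local Open Scope ring_scope.

Section SDPDefs.
Variable R : realType.

Definition inprod (k l : nat) (U V : 'M[R]_(k, l)) : R := \tr (U^T *m V).

Definition frob2 (k l : nat) (U : 'M[R]_(k, l)) : R := inprod U U.

Definition sym_mx (n : nat) (X : 'M[R]_n) : Prop := X^T = X.

Definition psd (n : nat) (X : 'M[R]_n) : Prop :=
  sym_mx X /\ forall v : 'cV[R]_n, 0 <= (v^T *m X *m v) 0 0.

Definition Aop (n m : nat) (A : 'I_m -> 'M[R]_n) (X : 'M[R]_n) : 'I_m -> R :=
  fun i => inprod (A i) X.

Definition Aadj (n m : nat) (A : 'I_m -> 'M[R]_n) (nu : 'cV[R]_m) : 'M[R]_n :=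
  \sum_(i < m) nu i 0 *: A i.

Definition SDPset (n m : nat) (A : 'I_m -> 'M[R]_n) (b : 'I_m -> R)
  (X : 'M[R]_n) : Prop :=
  (forall i, Aop A X i = b i) /\ psd X.

Definition Mp (n m p : nat) (A : 'I_m -> 'M[R]_n) (b : 'I_m -> R)
  (Y : 'M[R]_(n, p)) : Prop :=
  forall i, Aop A (Y *m Y^T) i = b i.

(* the matrix whose i-th row is the vectorization of A_i Y;
   its rank is dim span{A_1 Y, ..., A_m Y} *)
Definition Amat (n m p : nat) (A : 'I_m -> 'M[R]_n) (Y : 'M[R]_(n, p))
  : 'M[R]_(m, n * p) :=
  \matrix_(i < m) mxvec (A i *m Y).

Definition mopen (k l : nat) (U : set 'M[R]_(k, l)) : Prop :=
  forall Y, U Y -> exists2 e : R, 0 < e &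
    forall Z, frob2 (Z - Y) < e -> U Z.

Definition assumption1 (n m : nat) (A : 'I_m -> 'M[R]_n) (b : 'I_m -> R)
  (p : nat) : Prop :=
  (exists Y : 'M[R]_(n, p), Mp A b Y) /\
  ((forall Y : 'M[R]_(n, p), Mp A b Y -> row_free (Amat A Y)) \/
   (exists U : set 'M[R]_(n, p), mopen U /\ (forall Y, Mp A b Y -> U Y) /\
      exists r : nat, forall Y, U Y -> \rank (Amat A Y) = r)).

Definition is_MP_pinv (k : nat) (G H : 'M[R]_k) : Prop :=
  [/\ G *m H *m G = G, H *m G *m H = H,
      (G *m H)^T = G *m H & (H *m G)^T = H *m G].

Definition mp_pinv (k : nat) (G : 'M[R]_k) : 'M[R]_k :=
  xget 0 [set H | is_MP_pinv G H].

Definition Gram (n m p : nat) (A : 'I_m -> 'M[R]_n) (Y : 'M[R]_(n, p))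
  : 'M[R]_m :=
  \matrix_(i < m, j < m) inprod (A i *m Y) (A j *m Y).

Definition mu (n m p : nat) (A : 'I_m -> 'M[R]_n) (C : 'M[R]_n)
  (Y : 'M[R]_(n, p)) : 'cV[R]_m :=
  mp_pinv (Gram A Y) *m \col_(i < m) Aop A (C *m Y *m Y^T) i.

Definition Smat (n m p : nat) (A : 'I_m -> 'M[R]_n) (C : 'M[R]_n)
  (Y : 'M[R]_(n, p)) : 'M[R]_n :=
  C - Aadj A (mu A C Y).

Definition tangent (n m p : nat) (A : 'I_m -> 'M[R]_n) (Y : 'M[R]_(n, p))
  (Yd : 'M[R]_(n, p)) : Prop :=
  forall i, inprod (A i *m Y) Yd = 0.

Definition second_order_critical (n m p : nat) (A : 'I_m -> 'M[R]_n)
  (C : 'M[R]_n) (Y : 'M[R]_(n, p)) : Prop :=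
  Smat A C Y *m Y = 0 /\
  forall Yd, tangent A Y Yd -> 0 <= inprod Yd (Smat A C Y *m Yd).

Definition sdp_opt (n m : nat) (A : 'I_m -> 'M[R]_n) (b : 'I_m -> R)
  (C X : 'M[R]_n) : Prop :=
  SDPset A b X /\ forall X', SDPset A b X' -> inprod C X <= inprod C X'.

Definition P_opt (n m p : nat) (A : 'I_m -> 'M[R]_n) (b : 'I_m -> R)
  (C : 'M[R]_n) (Y : 'M[R]_(n, p)) : Prop :=
  Mp A b Y /\ forall Y' : 'M[R]_(n, p), Mp A b Y' -> inprod (C *m Y) Y <= inprod (C *m Y') Y'.

Definition convex_set (n : nat) (F : set 'M[R]_n) : Prop :=
  forall U V (t : R), F U -> F V -> 0 <= t <= 1 -> F ((1 - t) *: U + t *: V).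

Definition is_face (n : nat) (K F : set 'M[R]_n) : Prop :=
  [/\ (forall X, F X -> K X), convex_set F &
      forall U V (t : R), K U -> K V -> 0 < t < 1 ->
        F ((1 - t) *: U + t *: V) -> F U /\ F V].

Definition aff_hull (n : nat) (F : set 'M[R]_n) (Z : 'M[R]_n) : Prop :=
  exists k (w : 'I_k -> R) (Zs : 'I_k -> 'M[R]_n),
    [/\ forall i, F (Zs i), \sum_(i < k) w i = 1 & Z = \sum_(i < k) w i *: Zs i].

Definition relint (n : nat) (F : set 'M[R]_n) (X : 'M[R]_n) : Prop :=
  F X /\ exists2 e : R, 0 < e &
    forall Z, aff_hull F Z -> frob2 (Z - X) < e -> F Z.

(* dimension of the affine hull of F: the maximal number d of points Z_i of F
   such that the differences Z_i - X0 (X0 in F) are linearly independent *)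
Definition aff_indep (n : nat) (F : set 'M[R]_n) (X0 : 'M[R]_n) (d : nat) : Prop :=
  exists Zs : 'I_d -> 'M[R]_n,
    (forall i, F (Zs i)) /\ row_free (\matrix_(i < d) mxvec (Zs i - X0)).

Definition aff_dim (n : nat) (F : set 'M[R]_n) (d : nat) : Prop :=
  (exists X0, F X0 /\ aff_indep F X0 d) /\
  (forall X0 k, F X0 -> aff_indep F X0 k -> (k <= d)%N).

Definition eigenvalue_list (n : nat) (S : 'M[R]_n) (s : seq R) : Prop :=
  char_poly S = \prod_(x <- s) ('X - x%:P).

End SDPDefs.

From HB Require Import structures.
From mathcomp Require Import all_boot all_order all_algebra.
From mathcomp Require Import boolp classical_sets reals.
From mathcomp Require Import complex ring lra zify.

Set Implicit Arguments.
Unset Strict Implicit.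
Unset Printing Implicit Defensive.
Import Order.TTheory GRing.Theory Num.Theory.
Local Open Scope ring_scope.

(* Let k be the number of negative eigenvalues of S = S(Y). As S is symmetric it is
   diagonalizable over the reals, so S is negative definite on the range of some n x k
   matrix U. If U Z + Y M is a tangent vector, second-order criticality together with
   S Y = 0 gives 0 <= <U Z, S U Z>, which forces Z = 0. Hence the (kp + p^2)-dimensional
   space {U Z + Y M} meets the tangent space, of codimension m', only in directions Y M
   with <Y^T A_i Y, M> = 0, so kp + rank B <= m', where B has rows vec(Y^T A_i Y).
   Conversely, for every symmetric M with <Y^T A_i Y, M> = 0 both points
   Y Y^T +- e Y M Y^T are feasible for small e > 0, so they lie in the face of Y Y^T; as Y
   has full column rank this gives p(p+1)/2 - rank B affinely independent directions of
   the face. Adding the two bounds yields kp <= dim F - Delta. If k = 0 then S is psd, and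
   <C, X'> = <S, X'> + mu^T b >= mu^T b = <C, Y Y^T> for every feasible X', as S Y = 0. *)

Lemma trmx_free_mulmx_eq0 (F : fieldType) n p k (Y : 'M[F]_(n, p)) (M : 'M[F]_(p, k)) :
  row_free Y^T -> Y *m M = 0 -> M = 0.
Proof.
move=> Y_free /(congr1 trmx); rewrite trmx_mul trmx0 => /eqP.
by rewrite mulmx_free_eq0 // -trmx0 => /eqP /(can_inj trmxK).
Qed.

Lemma col_mulmx (R : pzRingType) k l q (A : 'M[R]_(k, l)) (B : 'M[R]_(l, q)) j :
  col j (A *m B) = A *m col j B.
Proof. by rewrite !colE mulmxA. Qed.

Lemma leq_rank_cap (F : fieldType) k l n (U : 'M[F]_(k, n)) (V : 'M[F]_(l, n)) :
  (\rank U + \rank V <= n + \rank (U :&: V)%MS)%N.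
Proof. by rewrite -mxrank_sum_cap leq_add2r rank_leq_col. Qed.

Definition negdef_on (R : numDomainType) n k (S : 'M[R]_n) (U : 'M[R]_(n, k)) :=
  forall z : 'cV[R]_k, z != 0 -> ((U *m z)^T *m S *m (U *m z)) 0 0 < 0.

Section RealMatrices.
Variable R : realDomainType.

Lemma trmx_mul_selfE k (w : 'cV[R]_k) : (w^T *m w) 0 0 = \sum_i w i 0 ^+ 2.
Proof. by rewrite mxE; apply: eq_bigr => i _; rewrite mxE expr2. Qed.

Lemma trmx_mul_self_ge0 k (w : 'cV[R]_k) : 0 <= (w^T *m w) 0 0.
Proof. by rewrite trmx_mul_selfE sumr_ge0 // => i _; rewrite sqr_ge0. Qed.

Lemma trmx_mul_self_gt0 k (w : 'cV[R]_k) : w != 0 -> 0 < (w^T *m w) 0 0.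
Proof.
case/cV0Pn => i wi; rewrite lt_def trmx_mul_self_ge0 andbT trmx_mul_selfE.
rewrite psumr_neq0 => [|j _]; last exact: sqr_ge0.
by apply/hasP; exists i; rewrite ?mem_index_enum //= exprn_even_gt0.
Qed.

Lemma quad_form_le k (M : 'M[R]_k) (w : 'cV[R]_k) :
  `|(w^T *m M *m w) 0 0| <= (\sum_a \sum_b `|M a b|) * (w^T *m w) 0 0.
Proof.
rewrite trmx_mul_selfE mxE; set s2 := \sum_(i < k) w i 0 ^+ 2.
have le_s2 a : `|w a 0| ^+ 2 <= s2.
  rewrite real_normK ?num_real // /s2 (bigD1 a) //= lerDl.
  by rewrite sumr_ge0 // => c _; rewrite sqr_ge0.
rewrite exchange_big mulr_suml /=; apply: le_trans (ler_norm_sum _ _ _) _.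
apply: ler_sum => b _; rewrite !mxE !mulr_suml; apply: le_trans (ler_norm_sum _ _ _) _.
apply: ler_sum => a _; rewrite !mxE !normrM.
have wab : `|w a 0| * `|w b 0| <= s2.
  have := le_s2 a; have := le_s2 b; have := sqr_ge0 (`|w a 0| - `|w b 0|); nra.
by rewrite mulrAC mulrC ler_wpM2l.
Qed.

Lemma negdef_on_col n (S : 'M[R]_n) (v : 'cV[R]_n) :
  (v^T *m S *m v) 0 0 < 0 -> negdef_on S v.
Proof.
move=> v_neg z z_neq0; have z00 : z 0 0 != 0.
  by apply: contraNneq z_neq0 => z0; apply/eqP; rewrite [z]mx11_scalar z0 raddf0.
rewrite [z]mx11_scalar mul_mx_scalar !linearZ /= -!scalemxAl 2!mxE mulrA -expr2.
by rewrite pmulr_rlt0 // exprn_even_gt0.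
Qed.

End RealMatrices.

Lemma diag_mxC (R : idomainType) n (d e : 'rV[R]_n) (G : 'M[R]_n) :
  (forall i j, d 0 i = d 0 j -> e 0 i = e 0 j) ->
  diag_mx d *m G = G *m diag_mx d -> diag_mx e *m G = G *m diag_mx e.
Proof.
move=> de /matrixP dG; apply/matrixP => i j; move: (dG i j).
rewrite !mul_diag_mx !mul_mx_diag !mxE.
have [-> _|Gij dGij] := eqVneq (G i j) 0; first by rewrite mulr0 mul0r.
by rewrite (de i j) 1?mulrC //; apply: (mulIf Gij); rewrite dGij mulrC.
Qed.

Section SymmetricDiagonalization.
Variables (R : rcfType) (n : nat) (S P : 'M[R]_n) (d : 'rV[R]_n).
Hypotheses (S_sym : S^T = S) (P_unit : P \in unitmx) (PS : P *m S = diag_mx d *m P).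

(* [P] need not be orthogonal; instead its Gram matrix [G] commutes with [diag_mx d],
   because [P *m S *m P^T] is symmetric. *)
Let G := P *m P^T.

Lemma gram_diagC : diag_mx d *m G = G *m diag_mx d.
Proof.
have dGE : diag_mx d *m G = P *m S *m P^T by rewrite PS !mulmxA.
have GT : G^T = G by rewrite trmx_mul trmxK.
by rewrite -[RHS]trmxK [in RHS]trmx_mul tr_diag_mx GT dGE !trmx_mul trmxK S_sym mulmxA.
Qed.

Lemma sym_diag_quad_lt0 (y : 'cV[R]_n) : y != 0 -> (forall i, y i 0 != 0 -> d 0 i < 0) ->
  ((P^T *m y)^T *m S *m (P^T *m y)) 0 0 < 0.
Proof.
move=> y_neq0 y_supp; pose E := diag_mx (\row_i Num.sqrt (- d 0 i)).
have EG : E *m G = G *m E by apply: (diag_mxC _ gram_diagC) => i j; rewrite !mxE => ->.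
have Dy : diag_mx d *m y = - (E *m (E *m y)).
  apply/colP => i; rewrite !mul_diag_mx !mxE mulrA -expr2.
  have [->|/y_supp di] := eqVneq (y i 0) 0; first by rewrite !mulr0 oppr0.
  by rewrite sqr_sqrtr ?mulNr ?opprK // oppr_ge0 ltW.
have Ey_neq0 : E *m y != 0.
  apply/cV0Pn; have [i yi] := cV0Pn _ y_neq0; exists i.
  by rewrite mul_diag_mx !mxE mulf_neq0 // gt_eqF // sqrtr_gt0 oppr_gt0 y_supp.
have -> : (P^T *m y)^T *m S *m (P^T *m y) =
    - ((P^T *m (E *m y))^T *m (P^T *m (E *m y))).
  have ET : E^T = E by rewrite tr_diag_mx.
  have yD : y^T *m diag_mx d = (diag_mx d *m y)^T by rewrite trmx_mul tr_diag_mx.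
  rewrite !trmx_mul trmxK ET !mulmxA -(mulmxA y^T P S) PS mulmxA yD Dy.
  rewrite linearN /= !trmx_mul ET !mulNmx; congr (- _).
  by rewrite -!(mulmxA _ P P^T) -/G -(mulmxA _ E G) EG !mulmxA.
rewrite mxE oppr_lt0; apply: trmx_mul_self_gt0.
have PT_unit : P^T \in unitmx by rewrite unitmx_tr.
by apply: contraNneq Ey_neq0 => /(congr1 (mulmx (invmx P^T))); rewrite mulKmx // mulmx0 => ->.
Qed.

Lemma sym_diag_negdef k (f : 'I_k -> 'I_n) :
  injective f -> (forall j, d 0 (f j) < 0) -> negdef_on S (colsub f P^T).
Proof.
move=> f_inj d_neg z z_neq0.
have -> : colsub f P^T = P^T *m colsub f 1%:M by rewrite mulmx_colsub mulmx1.
rewrite -!(mulmxA P^T); apply: sym_diag_quad_lt0 => [|i].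
  apply/cV0Pn; have [j zj] := cV0Pn _ z_neq0; exists (f j).
  rewrite mxE (bigD1 j) //= big1 ?addr0 => [|j' j'j]; first by rewrite !mxE eqxx mul1r.
  by rewrite !mxE (inj_eq f_inj) eq_sym (negbTE j'j) mul0r.
case: (pickP (fun j => i == f j)) => [j /eqP -> _|no_j]; first by rewrite d_neg.
by rewrite mxE big1 ?eqxx // => j _; rewrite !mxE no_j mul0r.
Qed.

Lemma sym_diag_sqrt : (forall i, 0 <= d 0 i) -> exists2 T : 'M[R]_n, T^T = T & T *m T = S.
Proof.
move=> d_ge0; pose E := diag_mx (\row_i Num.sqrt (d 0 i)).
have EG : E *m G = G *m E by apply: (diag_mxC _ gram_diagC) => i j; rewrite !mxE => ->.
have EE : E *m E = diag_mx d.
  by rewrite mulmx_diag; congr diag_mx; apply/rowP => i; rewrite !mxE -expr2 sqr_sqrtr.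
have PT_unit : P^T \in unitmx by rewrite unitmx_tr.
exists (invmx P *m E *m P); last first.
  by rewrite !mulmxA mulmxK // -(mulmxA _ E E) EE -mulmxA -PS mulKmx.
suff : P *m (invmx P *m E *m P)^T *m P^T = P *m (invmx P *m E *m P) *m P^T.
  move=> /(congr1 (fun M => invmx P *m M *m invmx P^T)).
  by rewrite !mulmxA !mulVmx // !mul1mx !mulmxK.
have ET : E^T = E by rewrite tr_diag_mx.
rewrite !trmx_mul ET !mulmxA -(mulmxA _ (invmx P)^T) -trmx_mul mulmxV // trmx1 mulmx1.
by rewrite mul1mx -/G -[RHS]mulmxA -/G EG.
Qed.

End SymmetricDiagonalization.

Lemma char_poly_similar (F : fieldType) n (S D P : 'M[F]_n) :
  P \in unitmx -> P *m S = D *m P -> char_poly S = char_poly D.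
Proof.
move=> P_unit PS; pose PX := map_mx polyC P.
have : PX *m char_poly_mx S = char_poly_mx D *m PX.
  by rewrite /char_poly_mx mulmxBr mulmxBl scalar_mxC /PX -!map_mxM PS.
move/(congr1 determinant); rewrite !det_mulmx det_map_mx [char_poly D * _]mulrC.
by apply: mulfI; rewrite polyC_eq0 -unitfE -unitmxE.
Qed.

Lemma char_poly_diag (R : comNzRingType) n (d : 'rV[R]_n) :
  char_poly (diag_mx d) = \prod_(x <- [seq d 0 i | i <- enum 'I_n]) ('X - x%:P).
Proof.
rewrite char_poly_trig ?diag_mx_is_trig // big_map enumT.
by apply: eq_bigr => i _; rewrite mxE eqxx mulr1n.
Qed.

(* Complexify, diagonalize by the spectral theorem for Hermitian matrices, and use that
   real matrices which are similar over C are similar through a real matrix. *)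
Lemma sym_similar_diag (R : rcfType) n (S : 'M[R]_n) : S^T = S ->
  exists (P : 'M[R]_n) (d : 'rV[R]_n), P \in unitmx /\ P *m S = diag_mx d *m P.
Proof.
move=> S_sym; pose toC := real_complex R.
have realmx_map k l (M : 'M[R]_(k, l)) : map_mx toC M \is a realmx.
  by apply/mxOverP => i j; rewrite mxE; apply/complex_realP; exists (M i j).
have Sherm : map_mx toC S \is hermsymmx.
  apply: realsym_hermsym (realmx_map _ _ _).
  apply/is_hermitianmxP; rewrite expr0 scale1r map_mx_id //.
  by apply/matrixP => i j; rewrite !mxE -[in RHS]S_sym mxE.
have /orthomx_spectralP Sdiag := hermitian_normalmx Sherm.
have [Q /andP[/= Qreal Qunit] /(similarP Qunit) QS] :
    similar_in [predI realmx & unitmx] (map_mx toC S) (diag_mx (spectral_diag (map_mx toC S))).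
  apply: real_similar (realmx_map _ _ _) _; last first.
    by rewrite mxOver_diag ?rpred0 // hermitian_spectral_diag_real.
  exists (spectralmx (map_mx toC S)); first exact: spectral_unit.
  apply/(similarLR (spectral_unit _)).
  by rewrite conjumx ?unitmx_inv ?spectral_unit // invmxK.
pose re k l (M : 'M[R[i]]_(k, l)) := map_mx (@complex.Re R) M.
have reK k l (M : 'M[R[i]]_(k, l)) : M \is a realmx -> map_mx toC (re _ _ M) = M.
  by move=> /mxOverP Mr; apply/matrixP => i j; rewrite !mxE; apply: RRe_real.
exists (re _ _ Q), (re _ _ (spectral_diag (map_mx toC S))); split.
  by rewrite -(map_unitmx toC) reK.
apply: (@map_mx_inj _ _ toC).
rewrite !map_mxM map_diag_mx !reK //.
exact: hermitian_spectral_diag_real.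
Qed.

Section SymmetricSpectrum.
Variables (R : rcfType) (n : nat) (S : 'M[R]_n).
Hypothesis S_sym : S^T = S.

Lemma sym_negdef_eigenvalues : exists2 s : seq R,
  char_poly S = \prod_(x <- s) ('X - x%:P) &
  exists U : 'M[R]_(n, count (fun x => x < 0) s), negdef_on S U.
Proof.
have [P [d [P_unit PS]]] := sym_similar_diag S_sym.
exists [seq d 0 i | i <- enum 'I_n]; first by rewrite (char_poly_similar P_unit PS) char_poly_diag.
pose N := [set i | d 0 i < 0].
have -> : count (fun x => x < 0) [seq d 0 i | i <- enum 'I_n] = #|N|.
  by rewrite count_map enumT cardE /enum_mem size_filter; apply: eq_count => i; rewrite /= inE.
exists (colsub (@enum_val _ (mem N)) P^T); apply: (sym_diag_negdef S_sym P_unit PS).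
  exact: enum_val_inj.
by move=> j; have := enum_valP j; rewrite inE.
Qed.

Lemma psd_sqrt : (forall v : 'cV[R]_n, 0 <= (v^T *m S *m v) 0 0) ->
  exists2 T : 'M[R]_n, T^T = T & T *m T = S.
Proof.
move=> S_psd; have [P [d [P_unit PS]]] := sym_similar_diag S_sym.
apply: (sym_diag_sqrt S_sym P_unit PS) => i; rewrite leNgt; apply/negP => d_neg.
have f_inj : injective (fun _ : 'I_1 => i) by move=> j j' _; rewrite !ord1.
have /(_ 1%:M) := sym_diag_negdef S_sym P_unit PS f_inj (fun _ => d_neg).
by rewrite ltNge S_psd oner_eq0 => /(_ isT).
Qed.

End SymmetricSpectrum.

Section SymmetricBasis.
Variables (R : numFieldType) (p : nat).

Definition upper_pairs := [set x : 'I_p * 'I_p | (x.1 <= x.2)%N].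

Lemma card_upper_pairs : #|upper_pairs| = (p * p.+1)./2.
Proof.
have cardE : #|upper_pairs| = (\sum_(a < p) \sum_(b < p) (a <= b))%N.
  rewrite -sum1_card big_mkcond /= pair_bigA /=.
  by apply: eq_bigr => -[a b] _; rewrite inE; case: leqP.
have sum_le_ge (a : 'I_p) : (\sum_(b < p) ((a <= b) + (b <= a)))%N = p.+1.
  rewrite (eq_bigr (fun b => 1 + (a == b))%N) => [|b _]; last first.
    by rewrite -val_eqE /=; case: ltngtP.
  rewrite big_split /= sum1_card card_ord (bigD1 a) //= eqxx big1 => [|b]; first by rewrite addn0 addn1.
  by rewrite eq_sym => /negbTE ->.
have cardE' : #|upper_pairs| = (\sum_(a < p) \sum_(b < p) (b <= a))%N.
  by rewrite cardE exchange_big.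
rewrite -[#|upper_pairs|]half_double -addnn {1}cardE cardE' -big_split /=.
rewrite (eq_bigr (fun=> p.+1)) => [|a _]; last by rewrite -(sum_le_ge a) big_split.
by rewrite sum_nat_const card_ord.
Qed.

Definition sym_basis : 'M[R]_(#|upper_pairs|, p * p) :=
  \matrix_i mxvec (delta_mx (enum_val i).1 (enum_val i).2 + delta_mx (enum_val i).2 (enum_val i).1).

Lemma sym_basisE s (a b : 'I_p) : sym_basis s (mxvec_index a b) =
  ((a == (enum_val s).1) && (b == (enum_val s).2))%:R +
  ((a == (enum_val s).2) && (b == (enum_val s).1))%:R.
Proof. by rewrite mxE mxvecE !mxE. Qed.

Lemma upper_pairs_eq (x y : 'I_p * 'I_p) : x \in upper_pairs -> y \in upper_pairs ->
  ((x.1 == y.1) && (x.2 == y.2)) || ((x.1 == y.2) && (x.2 == y.1)) = (x == y).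
Proof.
case: x y => [a c] [e f]; rewrite !inE /= => le_ac le_ef.
rewrite xpair_eqE; case E: ((a == e) && (c == f)) => //=.
apply/negbTE/andP => -[/eqP af /eqP ce].
have ef : e = f by apply/val_inj/eqP; rewrite eqn_leq le_ef -af -ce.
by move: E; rewrite af ce ef !eqxx.
Qed.

Lemma sym_basis_free : row_free sym_basis.
Proof.
apply: inj_row_free => v v0; apply/rowP => t; rewrite mxE.
have t_upper := enum_valP t.
have /rowP/(_ (mxvec_index (enum_val t).1 (enum_val t).2)) := v0.
rewrite !mxE (bigD1 t) //= big1 => [|s st]; last first.
  rewrite sym_basisE; have := upper_pairs_eq t_upper (enum_valP s).
  rewrite (inj_eq enum_val_inj) [t == s]eq_sym (negbTE st) => /norP [/negbTE -> /negbTE ->].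
  by rewrite addr0 mulr0.
rewrite addr0 sym_basisE !eqxx => /eqP; rewrite mulf_eq0 => /orP [/eqP //|].
by rewrite /=; case: (_ && _); rewrite ?addr0 ?oner_eq0 // -mulr2n pnatr_eq0.
Qed.

Lemma sym_basis_sym u : (u <= sym_basis)%MS -> (vec_mx u)^T = vec_mx u.
Proof.
case/submxP => w ->; apply/matrixP => a b; rewrite !mxE.
apply: eq_bigr => s _; rewrite !sym_basisE; congr (_ * _).
by rewrite addrC (andbC (b == _)) (andbC (b == _)).
Qed.

End SymmetricBasis.

Section FrobeniusInnerProduct.
Variable R : realType.

Lemma inprodC k l (U V : 'M[R]_(k, l)) : inprod U V = inprod V U.
Proof. by rewrite /inprod -mxtrace_tr trmx_mul trmxK. Qed.

Lemma inprod0r k l (U : 'M[R]_(k, l)) : inprod U 0 = 0.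
Proof. by rewrite /inprod mulmx0 mxtrace0. Qed.

Lemma inprodDr k l (U V W : 'M[R]_(k, l)) : inprod U (V + W) = inprod U V + inprod U W.
Proof. by rewrite /inprod mulmxDr mxtraceD. Qed.

Lemma inprodZr k l a (U V : 'M[R]_(k, l)) : inprod U (a *: V) = a * inprod U V.
Proof. by rewrite /inprod -scalemxAr mxtraceZ. Qed.

Lemma inprodDl k l (U V W : 'M[R]_(k, l)) : inprod (V + W) U = inprod V U + inprod W U.
Proof. by rewrite inprodC inprodDr !(inprodC U). Qed.

Lemma inprod_suml k l (I : Type) (r : seq I) (P : pred I) (F : I -> 'M[R]_(k, l)) U :
  inprod (\sum_(i <- r | P i) F i) U = \sum_(i <- r | P i) inprod (F i) U.
Proof. by rewrite /inprod linear_sum mulmx_suml raddf_sum. Qed.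

Lemma inprodZl k l a (U V : 'M[R]_(k, l)) : inprod (a *: V) U = a * inprod V U.
Proof. by rewrite inprodC inprodZr inprodC. Qed.

Lemma inprod_mulmxl k l q (A : 'M[R]_(k, l)) (B : 'M[R]_(l, q)) (V : 'M[R]_(k, q)) :
  inprod (A *m B) V = inprod B (A^T *m V).
Proof. by rewrite /inprod trmx_mul mulmxA. Qed.

Lemma inprod_mulmxr k l q (A : 'M[R]_(k, l)) (B : 'M[R]_(l, q)) (V : 'M[R]_(k, q)) :
  inprod (A *m B) V = inprod A (V *m B^T).
Proof. by rewrite /inprod trmx_mul -mulmxA mxtrace_mulC mulmxA. Qed.

Lemma inprod_sum_col k l (U V : 'M[R]_(k, l)) :
  inprod U V = \sum_j ((col j U)^T *m col j V) 0 0.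
Proof.
rewrite /inprod /mxtrace; apply: eq_bigr => j _.
by rewrite !mxE; apply: eq_bigr => i _; rewrite !mxE.
Qed.

Lemma inprod_mxvec k l (U V : 'M[R]_(k, l)) :
  inprod U V = (mxvec U *m (mxvec V)^T) 0 0.
Proof.
rewrite inprod_sum_col mxE (reindex _ (curry_mxvec_bij _ _)) /=.
under eq_bigr do rewrite mxE.
by rewrite exchange_big pair_bigA; apply: eq_bigr => -[i j] _; rewrite /= !mxE !mxvecE.
Qed.

End FrobeniusInnerProduct.

Section PsdMatrices.
Variable R : realType.

Lemma psd_inprod_ge0 n (S X : 'M[R]_n) : psd S -> psd X -> 0 <= inprod S X.
Proof.
case=> S_sym S_psd [_ X_psd]; have [T T_sym <-] := psd_sqrt S_sym S_psd.
rewrite inprod_mulmxr T_sym inprod_sum_col; apply: sumr_ge0 => j _.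
by rewrite col_mulmx mulmxA.
Qed.

Lemma psd_conj n p (Y : 'M[R]_(n, p)) (N : 'M[R]_p) : psd N -> psd (Y *m N *m Y^T).
Proof.
case=> N_sym N_psd; split; first by rewrite /sym_mx !trmx_mul trmxK N_sym mulmxA.
by move=> v; have := N_psd (Y^T *m v); rewrite trmx_mul trmxK !mulmxA.
Qed.

Lemma psd_mulmx_tr n p (Y : 'M[R]_(n, p)) : psd (Y *m Y^T).
Proof.
rewrite -[Y in Y *m _]mulmx1; apply: psd_conj; split; first exact: trmx1.
by move=> v; rewrite mulmx1 trmx_mul_self_ge0.
Qed.

Lemma psd_near_id p (M : 'M[R]_p) : M^T = M ->
  exists2 e : R, 0 < e & forall s, `|s| <= e -> psd (1%:M + s *: M).
Proof.
move=> M_sym; set K := \sum_a \sum_b `|M a b|.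
have K_ge0 : 0 <= K by rewrite !sumr_ge0 // => a _; rewrite sumr_ge0.
exists (K + 1)^-1 => [|s le_s]; first by rewrite invr_gt0; lra.
split; first by rewrite /sym_mx linearD /= linearZ /= M_sym tr_scalar_mx.
move=> w; rewrite mulmxDr mulmxDl mulmx1 -scalemxAr -scalemxAl mxE [X in _ + X]mxE.
have le_q := quad_form_le M w.
have le_sK : `|s| * K <= 1.
  by apply: le_trans (ler_wpM2r K_ge0 le_s) _; rewrite mulrC ler_pdivrMr; lra.
have le_sq : `|s| * `|(w^T *m M *m w) 0 0| <= (w^T *m w) 0 0.
  apply: le_trans (ler_wpM2l (normr_ge0 s) le_q) _.
  by rewrite -/K mulrA ler_piMl ?trmx_mul_self_ge0.
have := ler_norm (- (s * (w^T *m M *m w) 0 0)); rewrite normrN normrM; lra.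
Qed.

End PsdMatrices.

Section BurerMonteiro.
Variables (R : realType) (n m p : nat).
Variables (A : 'I_m -> 'M[R]_n) (b : 'I_m -> R) (C : 'M[R]_n).

Lemma SDPset_mulmx_tr (Z : 'M[R]_(n, p)) : Mp A b Z -> SDPset A b (Z *m Z^T).
Proof. by move=> Z_feas; split; last exact: psd_mulmx_tr. Qed.

Variable Y : 'M[R]_(n, p).
Local Notation S := (Smat A C Y).

Definition Amat_face : 'M[R]_(m, p * p) := \matrix_(i < m) mxvec (Y^T *m A i *m Y).

Lemma Amat_faceE (u : 'rV[R]_(p * p)) i :
  (u *m Amat_face^T) 0 i = inprod (Y^T *m A i *m Y) (vec_mx u).
Proof. by rewrite inprod_mxvec vec_mxK !mxE; apply: eq_bigr => j _; rewrite !mxE mulrC. Qed.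

Lemma tangentP (Yd : 'M[R]_(n, p)) :
  tangent A Y Yd <-> mxvec Yd *m (Amat A Y)^T = 0.
Proof.
have entryE i : (mxvec Yd *m (Amat A Y)^T) 0 i = inprod (A i *m Y) Yd.
  by rewrite inprod_mxvec !mxE; apply: eq_bigr => j _; rewrite !mxE mulrC.
split=> [Yd_tan|Yd_ker i]; first by apply/rowP => i; rewrite entryE Yd_tan mxE.
by rewrite -entryE Yd_ker mxE.
Qed.

Lemma inprod_face_tangent (M : 'M[R]_p) i :
  inprod (A i *m Y) (Y *m M) = inprod (Y^T *m A i *m Y) M.
Proof. by rewrite -mulmxA [RHS]inprod_mulmxl trmxK. Qed.

Lemma inprod_face (M : 'M[R]_p) i :
  inprod (A i) (Y *m M *m Y^T) = inprod (Y^T *m A i *m Y) M.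
Proof. by rewrite -inprod_face_tangent [RHS]inprod_mulmxr. Qed.

Lemma inprod_C_SDPset X : SDPset A b X ->
  inprod C X = inprod S X + \sum_i mu A C Y i 0 * b i.
Proof.
case=> AX _; rewrite -{1}(subrK (Aadj A (mu A C Y)) C) inprodDl /Aadj inprod_suml.
by congr (_ + _); apply: eq_bigr => i _; rewrite inprodZl -AX.
Qed.

Lemma sdp_opt_of_psd : Mp A b Y -> psd S -> S *m Y = 0 ->
  sdp_opt A b C (Y *m Y^T).
Proof.
move=> Y_feas S_psd SY; have X_feas := SDPset_mulmx_tr Y_feas.
split=> // X' X'_feas; rewrite !inprod_C_SDPset // lerD2r.
have -> : inprod S (Y *m Y^T) = 0 by rewrite inprodC inprod_mulmxr trmxK SY inprod0r.
exact: psd_inprod_ge0 X'_feas.2.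
Qed.

Lemma P_opt_of_sdp_opt : Mp A b Y -> sdp_opt A b C (Y *m Y^T) -> P_opt A b C Y.
Proof.
move=> Y_feas [_ X_opt]; split=> // Y' Y'_feas.
by rewrite !inprod_mulmxr X_opt //; apply: SDPset_mulmx_tr.
Qed.

Hypotheses (A_sym : forall i, sym_mx (A i)) (C_sym : sym_mx C).

Lemma Smat_sym : S^T = S.
Proof.
rewrite /Smat /Aadj linearB /= C_sym linear_sum; congr (_ - _).
by apply: eq_bigr => i _; rewrite linearZ /= A_sym.
Qed.

Hypotheses (Y_soc : second_order_critical A C Y) (Y_free : row_free Y^T).

Lemma trmx_mul_Smat : Y^T *m S = 0.
Proof. by rewrite -Smat_sym -trmx_mul Y_soc.1 trmx0. Qed.

Section NegativeDirections.
Variables (k : nat) (U : 'M[R]_(n, k)).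
Hypothesis U_neg : negdef_on S U.

Lemma soc_tangent_range (Z : 'M[R]_(k, p)) (M : 'M[R]_p) :
  tangent A Y (U *m Z + Y *m M) -> Z = 0.
Proof.
move=> /Y_soc.2; rewrite mulmxDr (mulmxA _ Y M) Y_soc.1 mul0mx addr0 inprodDl.
rewrite (inprod_mulmxl Y M) (mulmxA Y^T) trmx_mul_Smat mul0mx inprod0r addr0 inprod_sum_col.
set q := fun j => ((U *m col j Z)^T *m S *m (U *m col j Z)) 0 0.
have -> : \sum_j ((col j (U *m Z))^T *m col j (S *m (U *m Z))) 0 0 = \sum_j q j.
  by apply: eq_bigr => j _; rewrite !col_mulmx /q -mulmxA.
have q_le0 j : q j <= 0.
  by rewrite /q; have [->|/U_neg/ltW//] := eqVneq (col j Z) 0; rewrite !mulmx0 mxE.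
move=> q_ge0; apply/matrixP => i j; apply/eqP; apply: contraLR q_ge0 => Zij.
have Zj : col j Z != 0 by apply/cV0Pn; exists i; move: Zij; rewrite !mxE.
rewrite -ltNge (bigD1 j) //=; apply: (le_lt_trans _ (U_neg Zj)).
by rewrite gerDl sumr_le0.
Qed.

Let UY_lin := col_mx (lin_mulmx U : 'M_(k * p, n * p)) (lin_mulmx Y : 'M_(p * p, n * p)).

Lemma vec_mx_mul_UY_lin (w : 'rV[R]_(k * p + p * p)) :
  vec_mx (w *m UY_lin) = U *m vec_mx (lsubmx w) + Y *m vec_mx (rsubmx w).
Proof. by rewrite -{1}(hsubmxK w) mul_row_col !mul_rV_lin linearD /= !mxvecK. Qed.

Lemma UY_lin_free : row_free UY_lin.
Proof.
apply: inj_row_free => w wL0.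
have L0 := vec_mx_mul_UY_lin w; rewrite wL0 linear0 in L0.
have Z0 : vec_mx (lsubmx w) = 0.
  by apply: (soc_tangent_range (M := vec_mx (rsubmx w))); rewrite -L0 => i; rewrite inprod0r.
have M0 : vec_mx (rsubmx w) = 0.
  by apply: (trmx_free_mulmx_eq0 Y_free); rewrite L0 Z0 mulmx0 add0r.
by rewrite -(hsubmxK w) -(vec_mxK (lsubmx w)) -(vec_mxK (rsubmx w)) Z0 M0 !linear0 row_mx0.
Qed.

Lemma UY_lin_cap_tangent :
  (UY_lin :&: kermx (Amat A Y)^T <= kermx Amat_face^T *m lin_mulmx Y)%MS.
Proof.
apply/row_subP => i; have := row_sub i (UY_lin :&: kermx (Amat A Y)^T)%MS.
rewrite sub_capmx => /andP [/submxP [w ->] wL_ker].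
have wL_tan : tangent A Y (vec_mx (w *m UY_lin)) by apply/tangentP; rewrite vec_mxK; apply/sub_kermxP.
rewrite vec_mx_mul_UY_lin in wL_tan.
have Z0 := soc_tangent_range wL_tan; rewrite Z0 mulmx0 add0r in wL_tan.
have -> : w *m UY_lin = rsubmx w *m lin_mulmx Y.
  by rewrite -{1}(hsubmxK w) mul_row_col -(vec_mxK (lsubmx w)) Z0 linear0 mul0mx add0r.
apply/submxMr/sub_kermxP/rowP => j.
by rewrite Amat_faceE -inprod_face_tangent wL_tan !mxE.
Qed.

Lemma negdef_rank_le : (k * p + \rank Amat_face <= \rank (Amat A Y))%N.
Proof.
have := leq_rank_cap UY_lin (kermx (Amat A Y)^T).
have := leq_trans (mxrankS UY_lin_cap_tangent) (mxrankM_maxl _ _).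
rewrite (eqP UY_lin_free) !mxrank_ker !mxrank_tr.
have := rank_leq_col (Amat A Y); have := rank_leq_col Amat_face; lia.
Qed.

End NegativeDirections.

End BurerMonteiro.

Section FaceDimension.
Variables (R : realType) (n m p : nat) (A : 'I_m -> 'M[R]_n) (b : 'I_m -> R).
Variables (Y : 'M[R]_(n, p)) (F : set 'M[R]_n).
Hypotheses (Y_feas : Mp A b Y) (Y_free : row_free Y^T).
Hypotheses (F_face : is_face (SDPset A b) F) (F_Y : F (Y *m Y^T)).

Lemma face_sym_direction (M : 'M[R]_p) :
  M^T = M -> (forall i, inprod (Y^T *m A i *m Y) M = 0) ->
  exists2 e : R, 0 < e & F (Y *m Y^T + e *: (Y *m M *m Y^T)).
Proof.
move=> M_sym M_ker; have [e e_gt0 e_psd] := psd_near_id M_sym.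
have feas s : `|s| <= e -> SDPset A b (Y *m Y^T + s *: (Y *m M *m Y^T)).
  move=> le_s; split=> [i|].
    by rewrite /Aop inprodDr inprodZr inprod_face M_ker mulr0 addr0; apply: Y_feas.
  have -> : Y *m Y^T + s *: (Y *m M *m Y^T) = Y *m (1%:M + s *: M) *m Y^T.
    by rewrite mulmxDr mulmx1 mulmxDl -scalemxAr -scalemxAl.
  exact: psd_conj (e_psd _ le_s).
have [_ _ F_ext] := F_face; exists e => //.
have le_e : `|e| <= e by rewrite gtr0_norm.
have le_ne : `|(- e)| <= e by rewrite normrN gtr0_norm.
have half : 0 < (1 / 2 : R) < 1 by apply/andP; split; lra.
have := F_ext _ _ (1 / 2) (feas e le_e) (feas (- e) le_ne) half.
have -> : (1 - 1 / 2) *: (Y *m Y^T + e *: (Y *m M *m Y^T)) +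
    1 / 2 *: (Y *m Y^T + - e *: (Y *m M *m Y^T)) = Y *m Y^T.
  by apply/matrixP => i j; rewrite !mxE; field.
by case/(_ F_Y).
Qed.

Let conj_lin : 'M[R]_(p * p, n * n) := lin_mulmx Y *m lin_mulmxr Y^T.

Lemma conj_linE (u : 'rV[R]_(p * p)) : u *m conj_lin = mxvec (Y *m vec_mx u *m Y^T).
Proof. by rewrite mulmxA !mul_rV_lin /= mxvecK. Qed.

Lemma conj_lin_free : row_free conj_lin.
Proof.
apply: inj_row_free => u; rewrite conj_linE -mulmxA => /(canRL mxvecK).
rewrite linear0 => /(trmx_free_mulmx_eq0 Y_free) /(congr1 trmx).
rewrite trmx_mul trmxK trmx0 => /(trmx_free_mulmx_eq0 Y_free) /(congr1 trmx).
by rewrite trmxK trmx0 => /(canRL vec_mxK); rewrite linear0.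
Qed.

Let face_dirs := (sym_basis R p :&: kermx (Amat_face A Y)^T)%MS.

Lemma face_dirs_indep : aff_indep F (Y *m Y^T) (\rank face_dirs).
Proof.
pose M i := vec_mx (row i (row_base face_dirs)).
have M_dir i : exists e : R, 0 < e /\ F (Y *m Y^T + e *: (Y *m M i *m Y^T)).
  have /(submx_trans (row_sub i _)) : (row_base face_dirs <= face_dirs)%MS.
    by rewrite eq_row_base.
  rewrite sub_capmx => /andP [/sym_basis_sym M_sym /sub_kermxP M_ker].
  have [j|e e_gt0 Fe] := face_sym_direction M_sym; last by exists e.
  by rewrite -Amat_faceE M_ker mxE.
have [e e_F] := choice M_dir.
exists (fun i => Y *m Y^T + e i *: (Y *m M i *m Y^T)); split=> [i|]; first by case: (e_F i).
have -> : \matrix_i mxvec (Y *m Y^T + e i *: (Y *m M i *m Y^T) - Y *m Y^T) =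
    diag_mx (\row_i e i) *m row_base face_dirs *m conj_lin.
  apply/row_matrixP => i; rewrite rowK !row_mul row_diag_mx -scalemxAl -rowE.
  by rewrite -scalemxAl conj_linE addrAC subrr add0r linearZ /= mxE.
have e_full : row_full (diag_mx (\row_i e i)).
  rewrite row_full_unit unitmxE det_diag unitfE; apply/prodf_neq0 => i _.
  by rewrite mxE gt_eqF //; case: (e_F i).
by rewrite /row_free mxrankMfree ?conj_lin_free // (eqmxMfull _ e_full) eq_row_base.
Qed.

Lemma face_dim_ge d : aff_dim F d -> ((p * p.+1)./2 <= d + \rank (Amat_face A Y))%N.
Proof.
move=> [_ F_dim]; have := F_dim _ _ F_Y face_dirs_indep.
have := leq_rank_cap (sym_basis R p) (kermx (Amat_face A Y)^T).
have rank_sym : \rank (sym_basis R p) = (p * p.+1)./2.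
  by rewrite (eqP (sym_basis_free R p)); exact: card_upper_pairs.
rewrite -/face_dirs rank_sym mxrank_ker mxrank_tr.
(* [set] identifies two occurrences of this rank elaborated over distinct but convertible field instances. *)
have := rank_leq_col (Amat_face A Y); set r := \rank (Amat_face A Y); lia.
Qed.

End FaceDimension.

Theorem theorem4 (R : realType) (n m p : nat)
  (A : 'I_m -> 'M[R]_n) (b : 'I_m -> R) (C : 'M[R]_n) (Y : 'M[R]_(n, p)) :
  (forall i, sym_mx (A i)) -> sym_mx C ->
  (0 < p)%N ->
  assumption1 A b p ->
  Mp A b Y -> second_order_critical A C Y ->
  \rank Y = p ->
  forall F : set 'M[R]_n,
    is_face (SDPset A b) F -> relint F (Y *m Y^T) ->
  forall d : nat, aff_dim F d ->
  let S := Smat A C Y in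
  let Delta : int := ((p * p.+1)./2)%:Z - (\rank (Amat A Y))%:Z in
  (exists s : seq R, eigenvalue_list S s /\
     ((count (fun x => x < 0) s)%:Z <= ((d%:Z - Delta) %/ p%:Z)%Z)%R) /\
  ((d%:Z < Delta + p%:Z)%R ->
     psd S /\ sdp_opt A b C (Y *m Y^T) /\ P_opt A b C Y).
Proof.
move=> A_sym C_sym p_gt0 _ Y_feas Y_soc rankY F F_face [F_Y _] d F_dim S Delta.
have Y_free : row_free Y^T by rewrite /row_free mxrank_tr rankY.
have negdef_bound k (U : 'M[R]_(n, k)) : negdef_on S U -> (k%:Z * p%:Z <= d%:Z - Delta)%R.
  move=> U_neg; have := negdef_rank_le A_sym C_sym Y_soc Y_free U_neg.
  have := face_dim_ge Y_feas Y_free F_face F_Y F_dim; rewrite /Delta; lia.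
have [s s_eig [U U_neg]] := sym_negdef_eigenvalues (Smat_sym Y A_sym C_sym).
split.
  by exists s; split=> //; rewrite lez_divRL ?ltz_nat // (negdef_bound _ U).
move=> d_lt; have S_psd : psd S.
  split=> [|v]; first exact: Smat_sym.
  by rewrite leNgt; apply/negP => /negdef_on_col /negdef_bound; lia.
have X_opt := sdp_opt_of_psd Y_feas S_psd Y_soc.1.
by split; last split; last exact: P_opt_of_sdp_opt.
Qed.
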